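(* Let $B\ge 2$ and $\eta\in\mathbb{N}$. Then $t_{\eta+1}\;\ge\;\left\lfloor\dfrac{\gamma_B(\eta)}{(B-1)^2}\right\rfloor-(2B-4)$.
   Context: Fix an integer base $B \geq 2$. Every integer $x>0$ is written uniquely as $x=\sum_{i=0}^{L(x)-1} x_i B^i$ with digits $0 \le x_i \le B-1$ and $x_{L(x)-1}\neq 0$. Define $\mathcal{H}_B(x)=\sum_{i=0}^{L(x)-1} x_i^2$, $\mathcal{H}_B(0)=0$, $\mathcal{H}_B^0(x)=x$, $\mathcal{H}_B^{n}=\mathcal{H}_B\circ\mathcal{H}_B^{n-1}$. A positive integer $x$ is happy if $\mathcal{H}_B^n(x)=1$ for some $n\in\mathbb{N}$; its height is $\eta_B(x)=\min\{\alpha\in\mathbb{N}:\mathcal{H}_B^\alpha(x)=1\}$. For $n\in\mathbb{N}$, $\gamma_B(n)$ denotes the smallest happy number $x\ge 1$ with $\eta_B(x)=n$. For each $n$, $L_n=L(\gamma_B(n))$ is the number of base-$B$ digits of $\gamma_B(n)$, $t_n$ is the number of those digits equal to $B-1$, and $\alpha_n=L_n-t_n$ is the number of digits smaller than $B-1$. $\lfloor\cdot\rfloor$ is the integer part. *)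

From mathcomp Require Import all_boot.
Set Implicit Arguments. Unset Strict Implicit. Unset Printing Implicit Defensive.

(* Base-B digits of x, least significant first; digits B 0 = [::].
   The fuel x suffices since x %/ B < x for B >= 2, x > 0. *)
Fixpoint digits_aux (B fuel x : nat) : seq nat :=
  if fuel is k.+1 then
    if x == 0 then [::] else (x %% B) :: digits_aux B k (x %/ B)
  else [::].

Definition digits (B x : nat) : seq nat := digits_aux B x x.

Definition H (B x : nat) : nat := sumn [seq d ^ 2 | d <- digits B x].

Definition happy (B x : nat) : Prop := 0 < x /\ exists n, iter n (H B) x = 1.

Definition height (B x n : nat) : Prop :=
  iter n (H B) x = 1 /\ forall m, m < n -> iter m (H B) x <> 1.

Definition is_gamma (B n g : nat) : Prop :=
  [/\ 1 <= g, happy B g, height B g n &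
      forall y, 1 <= y -> happy B y -> height B y n -> g <= y].

Definition tcount (B x : nat) : nat := count (pred1 B.-1) (digits B x).

From Stdlib Require Import ZArith Zwf Lia Psatz.
From mathcomp Require Import all_boot zify.

(* Write g' = gamma_B(eta+1) with t digits equal to B-1 and let N be the sum of
   the squares of its other digits, so H_B(g') = t (B-1)^2 + N.  Since H_B(g') is
   happy of height eta, gamma_B(eta) <= H_B(g').  It remains to see that
   N < (2B-3)(B-1)^2.  Otherwise write N = q (B-1)^2 + r with q >= 2B-3 and
   r < (B-1)^2; by Lagrange's four-square theorem r = a^2+b^2+c^2+d^2 with
   a, b, c, d < B-1, so the number with digits a, b, c, d and t+q digits B-1 has
   the same image under H_B as g', hence the same height, yet it has fewer
   digits than g' (the digits of g' other than B-1 are at most B-2, and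
   (q+4)(B-2)^2 < q(B-1)^2 <= N), contradicting the minimality of g'. *)
Section FourSquaresZ.
Local Open Scope Z_scope.

Definition sq4 (a b c d : Z) : Z := a*a + b*b + c*c + d*d.

Lemma euler_four_square x1 x2 x3 x4 y1 y2 y3 y4 :
  sq4 x1 x2 x3 x4 * sq4 y1 y2 y3 y4 =
  sq4 (x1*y1 + x2*y2 + x3*y3 + x4*y4) (x1*y2 - x2*y1 + x3*y4 - x4*y3)
      (x1*y3 - x3*y1 + x4*y2 - x2*y4) (x1*y4 - x4*y1 + x2*y3 - x3*y2).
Proof. rewrite /sq4; ring. Qed.

Definition centered (m y : Z) : Prop := - (m / 2) <= y <= m - 1 - m / 2.

Lemma centered_residue m x : 0 < m -> exists k y, x = m * k + y /\ centered m y.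
Proof.
move=> Hm; exists ((x + m / 2) / m), ((x + m / 2) mod m - m / 2); rewrite /centered.
have := Z.div_mod (x + m / 2) m ltac:(lia).
have := Z.mod_pos_bound (x + m / 2) m Hm.
lia.
Qed.

Variable p : Z.
Hypothesis p_prime : forall d, 1 < d < p -> ~ (d | p).

(* If m*p = sum x_i^2 and the y_i are centered residues of the x_i, then
   sum y_i^2 = m*r with 0 < r < m: the extreme values r = 0 and r = m would
   force m to divide p. *)
Lemma reduced_multiple_proper {m r x1 x2 x3 x4 k1 k2 k3 k4 y1 y2 y3 y4} :
  1 < m < p -> m * p = sq4 x1 x2 x3 x4 ->
  x1 = m * k1 + y1 -> x2 = m * k2 + y2 -> x3 = m * k3 + y3 -> x4 = m * k4 + y4 ->
  centered m y1 -> centered m y2 -> centered m y3 -> centered m y4 ->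
  m * r = sq4 y1 y2 y3 y4 -> 0 < r < m.
Proof.
rewrite /centered /sq4 => Hm Hx E1 E2 E3 E4 C1 C2 C3 C4 Hr.
have Hh := Z.div_mod m 2 ltac:(lia); have Hh2 := Z.mod_pos_bound m 2 ltac:(lia).
move: (m / 2) (m mod 2) Hh Hh2 C1 C2 C3 C4 => h e Hh Hh2 C1 C2 C3 C4.
have B1 : y1*y1 <= h*h by nia. have B2 : y2*y2 <= h*h by nia.
have B3 : y3*y3 <= h*h by nia. have B4 : y4*y4 <= h*h by nia.
have [Hr0 Hrm] : 0 <= r <= m by nia.
subst x1 x2 x3 x4.
have [r0 | [rm | //]] : r = 0 \/ r = m \/ 0 < r < m by lia.
- (* all y_i vanish, so m divides every x_i and m^2 divides m*p *)
  have [Y1 [Y2 [Y3 Y4]]] : y1 = 0 /\ y2 = 0 /\ y3 = 0 /\ y4 = 0 by subst r; nia.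
  subst y1 y2 y3 y4.
  case: (p_prime m Hm); exists (k1*k1 + k2*k2 + k3*k3 + k4*k4).
  apply: (Z.mul_reg_l _ _ m); [lia | rewrite Hx; ring].
- (* m is even and every y_i equals -m/2 *)
  have e0 : e = 0 by subst r; nia.
  subst e r; rewrite Z.add_0_r in Hh.
  have [Y1 [Y2 [Y3 Y4]]] : y1 = -h /\ y2 = -h /\ y3 = -h /\ y4 = -h by nia.
  subst y1 y2 y3 y4.
  case: (p_prime m Hm); exists (k1*k1 + k2*k2 + k3*k3 + k4*k4 - (k1 + k2 + k3 + k4) + 1).
  apply: (Z.mul_reg_l _ _ m); [lia | rewrite Hx Hh; ring].
Qed.

Lemma descent_step {m x1 x2 x3 x4} :
  1 < m < p -> m * p = sq4 x1 x2 x3 x4 ->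
  exists r w1 w2 w3 w4, 0 < r < m /\ r * p = sq4 w1 w2 w3 w4.
Proof.
move=> Hm Hx; have m0 : 0 < m by lia.
have [k1 [y1 [E1 C1]]] := centered_residue m x1 m0.
have [k2 [y2 [E2 C2]]] := centered_residue m x2 m0.
have [k3 [y3 [E3 C3]]] := centered_residue m x3 m0.
have [k4 [y4 [E4 C4]]] := centered_residue m x4 m0.
set r := p - (2 * (k1*y1 + k2*y2 + k3*y3 + k4*y4) + m * (k1*k1 + k2*k2 + k3*k3 + k4*k4)).
have Hr : m * r = sq4 y1 y2 y3 y4 by rewrite /r /sq4 in Hx *; subst; nia.
have Hr_range := reduced_multiple_proper Hm Hx E1 E2 E3 E4 C1 C2 C3 C4 Hr.
(* each coordinate in Euler's identity for (m*p)*(m*r) is a multiple of m *)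
set w1 := r + (k1*y1 + k2*y2 + k3*y3 + k4*y4).
set w2 := k1*y2 - k2*y1 + k3*y4 - k4*y3.
set w3 := k1*y3 - k3*y1 + k4*y2 - k2*y4.
set w4 := k1*y4 - k4*y1 + k2*y3 - k3*y2.
have Z1 : x1*y1 + x2*y2 + x3*y3 + x4*y4 = m * w1 by rewrite /w1 /sq4 in Hr *; subst; nia.
have Z2 : x1*y2 - x2*y1 + x3*y4 - x4*y3 = m * w2 by rewrite /w2; subst; ring.
have Z3 : x1*y3 - x3*y1 + x4*y2 - x2*y4 = m * w3 by rewrite /w3; subst; ring.
have Z4 : x1*y4 - x4*y1 + x2*y3 - x3*y2 = m * w4 by rewrite /w4; subst; ring.
have Eul := euler_four_square x1 x2 x3 x4 y1 y2 y3 y4.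
rewrite Z1 Z2 Z3 Z4 -Hx -Hr in Eul.
exists r, w1, w2, w3, w4; split => //.
apply: (Z.mul_reg_l _ _ (m * m)); first nia.
transitivity (m * p * (m * r)); first ring.
by rewrite Eul /sq4; ring.
Qed.

Lemma multiple_descent m : 0 < m < p ->
  (exists x1 x2 x3 x4, m * p = sq4 x1 x2 x3 x4) -> exists a b c d, p = sq4 a b c d.
Proof.
induction m as [m IH] using (well_founded_induction (Zwf_well_founded 0)).
move=> Hm [x1 [x2 [x3 [x4 Hx]]]].
have [m_eq1 | m1] : m = 1 \/ 1 < m by lia.
  by exists x1, x2, x3, x4; lia.
have [r [w1 [w2 [w3 [w4 [Hr Hw]]]]]] := descent_step (conj m1 (proj2 Hm)) Hx.
apply: (IH r); [rewrite /Zwf; lia | lia | by exists w1, w2, w3, w4].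
Qed.

End FourSquaresZ.

Definition sum4 (n : nat) : Prop := exists a b c d : nat, n = a*a + b*b + c*c + d*d.

Lemma sum4_of_Z (n : nat) : (exists a b c d, Z.of_nat n = sq4 a b c d) -> sum4 n.
Proof.
move=> [a [b [c [d E]]]]; rewrite /sq4 in E.
by exists (Z.abs_nat a), (Z.abs_nat b), (Z.abs_nat c), (Z.abs_nat d); nia.
Qed.

Lemma sum4_mul m n : sum4 m -> sum4 n -> sum4 (m * n).
Proof.
move=> [x1 [x2 [x3 [x4 ->]]]] [y1 [y2 [y3 [y4 ->]]]].
have E := euler_four_square (Z.of_nat x1) (Z.of_nat x2) (Z.of_nat x3) (Z.of_nat x4)
                            (Z.of_nat y1) (Z.of_nat y2) (Z.of_nat y3) (Z.of_nat y4).
apply: sum4_of_Z; do 4 eexists; etransitivity; last exact: E.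
by rewrite /sq4 !Nat2Z.inj_mul !Nat2Z.inj_add !Nat2Z.inj_mul; ring.
Qed.

Lemma half_squares_inj p x y : prime p -> x <= p./2 -> y <= p./2 ->
  x * x = y * y %[mod p] -> x = y.
Proof.
move=> pp hx hy; have hp := prime_gt1 pp.
have hh : p./2 + p./2 <= p by rewrite addnn -[leqRHS]odd_double_half; lia.
wlog le_xy : x y hx hy / x <= y.
  move=> W E; case: (leqP x y) => l; first exact: W.
  by symmetry; apply: W => //; lia.
move=> /eqP; rewrite eq_sym eqn_mod_dvd; last by apply: leq_mul.
rewrite !mulnn subn_sqr Euclid_dvdM //; case/orP=> /dvdn_leq H.
- by case: (posnP (y - x)) => [|/H]; lia.
- by case: (posnP (y + x)) => [|/H]; lia.
Qed.

Lemma neg_mod_inj p u v : u < p -> v < p -> (p - u) %% p = (p - v) %% p -> u = v.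
Proof.
have E w : w < p -> (p - w) %% p = if w == 0 then 0 else p - w.
  move=> hw; case: eqP => [->|nz]; first by rewrite subn0 modnn.
  by rewrite modn_small; lia.
by move=> hu hv; rewrite !E //; case: eqP; case: eqP; lia.
Qed.

(* Modulo a prime p, -1 is a sum of two squares of numbers at most p/2: the
   p/2+1 residues x^2 and the p/2+1 residues -(y^2+1) cannot all be distinct. *)
Lemma minus_one_two_squares p : prime p ->
  exists x y, [/\ x <= p./2, y <= p./2 & p %| x * x + y * y + 1].
Proof.
move=> pp; have hp := prime_gt1 pp; set h := p./2.
set A := [seq (x * x) %% p | x <- iota 0 h.+1].
set C := [seq (p - (y * y + 1) %% p) %% p | y <- iota 0 h.+1].
have uA : uniq A.
  rewrite map_inj_in_uniq ?iota_uniq // => x y.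
  rewrite !mem_iota => /andP[_ hx] /andP[_ hy]; apply: half_squares_inj; lia.
have uC : uniq C.
  rewrite map_inj_in_uniq ?iota_uniq // => x y.
  rewrite !mem_iota => /andP[_ hx] /andP[_ hy] /neg_mod_inj E.
  apply: half_squares_inj; [exact: pp | lia | lia |].
  by apply/eqP; rewrite -(eqn_modDr 1); apply/eqP; apply: E; apply: ltn_pmod; lia.
have : has (mem A) C.
  apply/negPn/negP => disjAC.
  have uAC : uniq (A ++ C).
    rewrite cat_uniq uA uC andbT; apply: contra disjAC => /hasP[z zA zC].
    by apply/hasP; exists z.
  have subAC : {subset A ++ C <= iota 0 p}.
    move=> z; rewrite mem_cat mem_iota add0n => /orP[] /mapP[? _ ->]; apply: ltn_pmod; lia.
  have := uniq_leq_size uAC subAC; rewrite size_cat !size_map !size_iota.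
  have := odd_double_half p; rewrite -/h; lia.
case/hasP=> z /mapP[y]; rewrite mem_iota => /andP[_ hy] ->.
case/mapP=> x; rewrite mem_iota => /andP[_ hx] E.
exists x, y; split; [lia | lia |].
rewrite /dvdn -addnA -modnDm -E.
have hv := ltn_pmod (y * y + 1) (ltnW hp).
case: (posnP ((y * y + 1) %% p)) => [->|v0]; first by rewrite subn0 modnn add0n mod0n.
by rewrite (@modn_small (p - _)) ?subnK ?modnn //; lia.
Qed.

(* Lagrange's theorem for primes: descend from the multiple x^2 + y^2 + 1 < p^2. *)
Lemma four_squares_prime p : prime p -> sum4 p.
Proof.
move=> pp; have hp := prime_gt1 pp.
case: (boolP (odd p)) => op; last first.
  by move/(prime_oddPn pp): op => ->; exists 1, 1, 0, 0.
have hd := odd_double_half p; rewrite op /= in hd.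
have [x [y [hx hy /dvdnP[m Em]]]] := minus_one_two_squares p pp.
have m_range : 0 < m < p by apply/andP; split; nia.
have Zprime : forall d, (1 < d < Z.of_nat p)%Z -> ~ (d | Z.of_nat p)%Z.
  move=> d hd' [k E].
  have E2 : (Z.to_nat k * Z.to_nat d = p)%N by nia.
  case/primeP: pp => _ /(_ (Z.to_nat d)).
  by rewrite -E2 dvdn_mull // => /(_ isT) /orP[] /eqP; lia.
apply: sum4_of_Z; apply: (@multiple_descent _ Zprime (Z.of_nat m)); first lia.
by exists (Z.of_nat x), (Z.of_nat y), 1%Z, 0%Z; rewrite /sq4; lia.
Qed.

Lemma four_squares n : sum4 n.
Proof.
elim: n {-2}n (leqnn n) => [|N IH] n hn.
  by move: hn; rewrite leqn0 => /eqP ->; exists 0, 0, 0, 0.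
case: (leqP n 1) => n1.
  by case: n n1 {hn} => [|[|//]] _; [exists 0, 0, 0, 0 | exists 1, 0, 0, 0].
have pp := pdiv_prime n1.
rewrite -(divnK (pdiv_dvd n)) mulnC; apply: sum4_mul; first exact: four_squares_prime.
by apply: IH; have := ltn_Pdiv (prime_gt1 pp) (ltnW n1); lia.
Qed.

Section Digits.
Variable B : nat.
Hypothesis HB : 2 <= B.

Lemma digits_aux_fuel f1 f2 x : x <= f1 -> x <= f2 ->
  digits_aux B f1 x = digits_aux B f2 x.
Proof.
elim: f1 f2 x => [|f1 IH] [|f2] x /= h1 h2 //; try by have -> : x = 0 by lia.
case: (posnP x) => [// | x0]; have := ltn_Pdiv HB x0.
by move=> lt_div; congr (_ :: _); apply: IH; lia.
Qed.

Lemma digitsS x : 0 < x -> digits B x = x %% B :: digits B (x %/ B).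
Proof.
case: x => // k _; rewrite /digits /=; congr (_ :: _).
by apply: digits_aux_fuel => //; have := ltn_Pdiv HB (ltn0Sn k); lia.
Qed.

Lemma digits_lt x : all (fun d => d < B) (digits B x).
Proof.
elim: x {-2}x (leqnn x) => [|n IH] x hx; first by have -> : x = 0 by lia.
case: (posnP x) => [->//|x0].
rewrite digitsS //= ltn_pmod ?(leq_trans _ HB) //= IH //.
by have := ltn_Pdiv HB x0; lia.
Qed.

Lemma digits_size_le x : 0 < x -> B ^ (size (digits B x)).-1 <= x.
Proof.
elim: x {-2}x (leqnn x) => [|n IH] x hx x0; first lia.
rewrite digitsS //=; case: (posnP (x %/ B)) => [-> //|q0].
have h1 := IH (x %/ B) ltac:(have := ltn_Pdiv HB x0; lia) q0.
have h2 : 0 < size (digits B (x %/ B)) by rewrite digitsS.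
rewrite -(prednK h2) expnS; apply: (leq_trans (leq_mul (leqnn B) h1)).
by rewrite mulnC leq_divM.
Qed.

Definition num (l : seq nat) : nat := foldr (fun d acc => d + B * acc) 0 l.

Lemma num_pos l : last 1 l != 0 -> l != [::] -> 0 < num l.
Proof.
elim: l => // d [|e l] IH /= hl _; first by rewrite muln0 addn0; lia.
have := IH hl isT; rewrite /= => h.
have : 0 < B * (e + B * num l) by rewrite muln_gt0 h; lia.
lia.
Qed.

Lemma digits_num l : all (fun d => d < B) l -> last 1 l != 0 -> digits B (num l) = l.
Proof.
elim: l => // d l IH /= /andP[hd hl] hlast.
have pos : 0 < num (d :: l) by apply: num_pos.
rewrite digitsS //.
have e1 : (d + B * num l) %% B = d by rewrite addnC mulnC modnMDl modn_small.
have e2 : (d + B * num l) %/ B = num l.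
  by rewrite addnC mulnC divnMDl ?(leq_trans _ HB) // divn_small // addn0.
by rewrite /= e1 e2 IH //; case: l {IH hl e1 e2 pos} hlast.
Qed.

Lemma num_lt l : all (fun d => d < B) l -> num l < B ^ size l.
Proof.
elim: l => [|d l IH] //= /andP[hd /IH h]; rewrite expnS.
have : B * (num l).+1 <= B * B ^ size l by rewrite leq_mul2l h orbT.
lia.
Qed.

End Digits.

Definition sqsum (s : seq nat) : nat := sumn [seq d ^ 2 | d <- s].

Lemma sqsum_split c s : sqsum s = count (pred1 c) s * c ^ 2 + sqsum (filter (predC1 c) s).
Proof. by elim: s => //= d s; rewrite /sqsum /= => ->; case: eqP => [->|_] /=; lia. Qed.

Lemma sqsum_le b s : all (fun d => d <= b) s -> sqsum s <= size s * b ^ 2.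
Proof.
elim: s => //= d s IH /andP[hd /IH h]; rewrite /sqsum /= in h *.
have : d ^ 2 <= b ^ 2 by rewrite leq_exp2r.
rewrite mulSn; lia.
Qed.

Lemma sqsum_cat s1 s2 : sqsum (s1 ++ s2) = sqsum s1 + sqsum s2.
Proof. by rewrite /sqsum map_cat sumn_cat. Qed.

Lemma sqsum_nseq n c : sqsum (nseq n c) = n * c ^ 2.
Proof. by elim: n => //= n; rewrite /sqsum /= => ->; rewrite mulSn. Qed.

(* Any value k (B-1)^2 + r with k > 0 and r < (B-1)^2 is the image under H_B of
   a number with at most k + 4 digits: k digits B-1, plus four digits for the
   four squares summing to r (Lagrange). *)
Lemma short_H_preimage {B k r} : 2 <= B -> 0 < k -> r < B.-1 ^ 2 ->
  exists y, [/\ 0 < y, y != 1, H B y = k * B.-1 ^ 2 + r & y < B ^ (k + 4)].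
Proof.
move=> HB k0 hr; have [a [b [c [d Er]]]] := four_squares r.
have small (e : nat) : e * e <= r -> e < B.-1 by rewrite mulnn -ltn_sqr; lia.
have [ha hb hc hd] : [/\ a < B.-1, b < B.-1, c < B.-1 & d < B.-1].
  by split; apply: small; lia.
set l := [:: a; b; c; d] ++ nseq k B.-1.
have l_digits : all (fun e => e < B) l.
  by rewrite all_cat all_nseq /=; lia.
have l_last : last 1 l != 0.
  rewrite /l last_cat -(prednK k0) /=.
  by elim: k.-1 => [|n IH] //=; lia.
have dl := digits_num B HB l l_digits l_last.
have size_l : size l = k + 4 by rewrite size_cat size_nseq addnC.
exists (num B l); split.
- by apply: num_pos.
- by apply/eqP => y1; move: (congr1 size dl); rewrite y1 size_l /=; lia.
- by rewrite /H dl -/(sqsum l) sqsum_cat sqsum_nseq Er /sqsum /= -!mulnn; lia.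
- by rewrite -size_l; apply: num_lt.
Qed.

Lemma iter_H0 B n : iter n (H B) 0 = 0.
Proof. by elim: n => //= n ->. Qed.

(* H_B(gamma_B(eta+1)) is a happy number of height eta, hence at least gamma_B(eta). *)
Lemma gamma_le_H_succ {B eta g g'} :
  is_gamma B eta g -> is_gamma B eta.+1 g' -> g <= H B g'.
Proof.
move=> [_ _ _ g_min] [_ _ [hit miss] _].
have H_pos : 1 <= H B g'.
  by case: (posnP (H B g')) => // H0; move: hit; rewrite iterSr H0 iter_H0.
apply: g_min => //; first by split=> //; exists eta; rewrite -iterSr.
by split=> [|m lt_m]; rewrite -iterSr //; apply: miss.
Qed.

(* gamma_B(n+1) is minimal among all y <> 1 sharing its image under H_B, since
   such y is happy of the same height. *)
Lemma gamma_succ_min {B n g'} y : is_gamma B n.+1 g' ->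
  0 < y -> y != 1 -> H B y = H B g' -> g' <= y.
Proof.
move=> [_ _ [hit miss] g'_min] y_pos y_ne1 Hy.
have hit_y : iter n.+1 (H B) y = 1 by rewrite iterSr Hy -iterSr.
apply: g'_min => //; first by split=> //; exists n.+1.
split=> // -[|m] lt_m; first by apply/eqP.
by rewrite iterSr Hy -iterSr; apply: miss.
Qed.

(* Numeric core of the digit count: for q >= 2B-3, q+4 digits of size at most
   B-2 have a smaller square sum than q digits B-1. *)
Lemma square_budget B q : 2 <= B -> 2 * B - 3 <= q -> (q + 4) * (B - 2) ^ 2 < q * B.-1 ^ 2.
Proof. by move=> HB hq; rewrite !expnS !expn0 !muln1; nia. Qed.

(* If x is minimal among the numbers y <> 1 with H_B(y) = H_B(x), the digits of x
   other than B-1 have square sum below (2B-3)(B-1)^2: otherwise trading q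
   multiples of (B-1)^2 for q digits B-1 and four more digits (Lagrange) would
   give a preimage of H_B(x) with fewer digits. *)
Lemma other_digits_bound {B x} : 2 <= B -> 0 < x ->
  (forall y, 0 < y -> y != 1 -> H B y = H B x -> x <= y) ->
  sqsum (filter (predC1 B.-1) (digits B x)) < (2 * B - 3) * B.-1 ^ 2.
Proof.
move=> HB x_pos x_min.
set R := filter _ _; set N := sqsum R; set P := B.-1 ^ 2; set t := tcount B x.
have P_pos : 0 < P by rewrite expn_gt0; lia.
rewrite ltnNge; apply/negP => N_big.
set q := N %/ P.
have q_big : 2 * B - 3 <= q by rewrite leq_divRL.
have HN : H B x = (t + q) * P + N %% P by rewrite /H -/(sqsum _) (sqsum_split B.-1) mulnDl -addnA -divn_eq.
have tq_pos : 0 < t + q by lia.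
have [y [y_pos y_ne1 Hy y_small]] := short_H_preimage HB tq_pos (ltn_pmod N P_pos).
(* x has t + size R digits, y has at most t + q + 4, and x <= y *)
have x_le_y : x <= y by apply: x_min; rewrite // Hy HN.
have size_x : size (digits B x) = t + size R.
  by rewrite size_filter /t /tcount count_predC.
have : B ^ (t + size R).-1 < B ^ (t + q + 4).
  by rewrite -size_x; apply: leq_ltn_trans (digits_size_le B HB x x_pos) _; lia.
rewrite ltn_exp2l // => size_lt.
have size_R : size R <= q + 4 by lia.
have R_small : all (fun d => d <= B - 2) R.
  apply/allP => d; rewrite mem_filter => /andP[/= ne_d d_in].
  by have := allP (digits_lt B HB x) d d_in; rewrite /=; lia.
(* N <= size R * (B-2)^2 <= (q+4) * (B-2)^2 < q * P <= N *)
have : N < N.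
  apply: leq_ltn_trans (sqsum_le (B - 2) R R_small) _.
  apply: (@leq_ltn_trans ((q + 4) * (B - 2) ^ 2)).
    by rewrite leq_mul2r size_R orbT.
  exact: leq_trans (square_budget B q HB q_big) (leq_divM N P).
by rewrite ltnn.
Qed.

Theorem corollary2p4 (B eta g g' : nat) :
  2 <= B ->
  is_gamma B eta g -> is_gamma B eta.+1 g' ->
  g %/ (B.-1 ^ 2) - (2 * B - 4) <= tcount B g'.
Proof.
move=> HB gamma_g gamma_g'.
have g'_pos : 0 < g' by case: gamma_g'.
have g_le := gamma_le_H_succ gamma_g gamma_g'.
have H_split : H B g' = tcount B g' * B.-1 ^ 2 + sqsum (filter (predC1 B.-1) (digits B g')).
  exact: sqsum_split.
have other := other_digits_bound HB g'_pos (fun y => gamma_succ_min y gamma_g').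
have : g %/ B.-1 ^ 2 < tcount B g' + (2 * B - 3).
  by rewrite ltn_divLR ?expn_gt0; lia.
lia.
Qed.
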